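(* Let $V$ be a nonempty set, $E\subset V\times V$, $W\subset V$, $W^c=V\setminus W$. Then $$\Delta_{W^c}\big(\Delta\cup(B_W\cup K_W^{-1})C_W\big)(E_W^{-1})^*(E_W)^*\,C_W\,(E_W^{-1})^*(E_W)^*\big(\Delta\cup C_W(B_W^-\cup K_W^{-1})\big)\Delta_{W^c} =\Delta_{W^c}(B_W\cup K_W^{-1})\,C_W\,(B_W^-\cup K_W^{-1})\Delta_{W^c}.$$
   Context: Relations on $V$: composition $RR'$: $x(RR')y$ iff there is $z$ with $xRz$ and $zR'y$; $R^{-1}$ is the converse; $R^0=\Delta$, $R^{n+1}=RR^n$, $R^+=\bigcup_{k\ge1}R^k$, $R^*=\bigcup_{k\ge0}R^k$. For $S\subset V$, $\Delta_S=\{(x,x):x\in S\}$, $\Delta=\Delta_V$. Definitions: $E_W=\Delta_{W^c}E$; $B_W=E(E_W)^*$; $B_W^-=(B_W)^{-1}=(E_W^{-1})^*E^{-1}$; $K_W=B_W^-\Delta_{W^c}B_W$; $C_W=(\Delta_WK_W\Delta_W)^+\cup\Delta_W$. *)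

From Stdlib Require Import Arith.

Definition rel (V : Type) := V -> V -> Prop.

Section Rels.
Context {V : Type}.

Definition rcomp (R R' : rel V) : rel V := fun x y => exists z, R x z /\ R' z y.
Definition rconv (R : rel V) : rel V := fun x y => R y x.
Definition runion (R R' : rel V) : rel V := fun x y => R x y \/ R' x y.
Definition diagS (S : V -> Prop) : rel V := fun x y => x = y /\ S x.
Definition diag : rel V := fun x y => x = y.
Definition compl (W : V -> Prop) : V -> Prop := fun x => ~ W x.
Fixpoint rpow (R : rel V) (n : nat) : rel V :=
  match n with
  | 0 => diag
  | S n' => rcomp R (rpow R n')
  end.
Definition rplus (R : rel V) : rel V := fun x y => exists k, 1 <= k /\ rpow R k x y.
Definition rstar (R : rel V) : rel V := fun x y => exists k, rpow R k x y.
Definition req (R R' : rel V) : Prop := forall x y, R x y <-> R' x y.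

Definition E_W (E : rel V) (W : V -> Prop) : rel V := rcomp (diagS (compl W)) E.
Definition B_W (E : rel V) (W : V -> Prop) : rel V := rcomp E (rstar (E_W E W)).
Definition Bm_W (E : rel V) (W : V -> Prop) : rel V := rconv (B_W E W).
Definition K_W (E : rel V) (W : V -> Prop) : rel V :=
  rcomp (Bm_W E W) (rcomp (diagS (compl W)) (B_W E W)).
Definition C_W (E : rel V) (W : V -> Prop) : rel V :=
  runion (rplus (rcomp (diagS W) (rcomp (K_W E W) (diagS W)))) (diagS W).

End Rels.

(** A peak [a <-* u ->* b] of [E_W] is either trivial ([a = u]) or starts at a
    vertex [u] outside [W] from which [B_W] reaches both [a] and [b].  Hence a
    peak from a vertex outside [W] to one in [W] is a [B_W] edge or a
    [K_W^{-1}] edge through [u], symmetrically for [B_W^-], and a peak between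
    two vertices of [W] is a [K_W] step, so it lies in [C_W].  As [C_W] is
    transitive and reflexive on [W], the peaks and the [Delta] alternatives on
    the left-hand side are absorbed into the central [C_W]; conversely every
    path on the right is recovered by taking all peaks trivial. *)

From Stdlib Require Import Lia.

Definition peak {V : Type} (R : rel V) : rel V := rcomp (rstar (rconv R)) (rstar R).

Section Powers.
Context {V : Type}.
Implicit Types (R : rel V) (P : V -> Prop).

Lemma rpow_add R m n x y z :
  rpow R m x y -> rpow R n y z -> rpow R (m + n) x z.
Proof.
  revert x; induction m as [|m IH]; intros x Hxy Hyz; simpl in *.
  - unfold diag in Hxy; subst; exact Hyz.
  - destruct Hxy as [w [Hxw Hwy]]; exists w; split; [exact Hxw | eauto].
Qed.

Lemma rpow_conv R k x y : rpow (rconv R) k x y -> rpow R k y x.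
Proof.
  revert x; induction k as [|k IH]; intros x H.
  - symmetry; exact H.
  - destruct H as [z [Hzx Hzy]].
    replace (S k) with (k + 1) by lia; apply (rpow_add _ _ _ _ z); [exact (IH _ Hzy)|].
    exists x; split; [exact Hzx | reflexivity].
Qed.

Lemma rstar_conv R x y : rstar (rconv R) x y -> rstar R y x.
Proof. intros [k H]; exists k; exact (rpow_conv _ _ _ _ H). Qed.

Lemma rstar_refl R x : rstar R x x.
Proof. exists 0; reflexivity. Qed.

Lemma rplus_trans R x y z : rplus R x y -> rplus R y z -> rplus R x z.
Proof.
  intros [m [Hm Hxy]] [n [Hn Hyz]]; exists (m + n); split; [lia|].
  exact (rpow_add _ _ _ _ _ _ Hxy Hyz).
Qed.

Lemma rplus_support R P x y :
  (forall a b, R a b -> P a /\ P b) -> rplus R x y -> P x /\ P y.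
Proof.
  intros HR [[|k] [Hk H]]; [lia|]; clear Hk.
  revert x H; induction k as [|k IH]; intros x [z [Hxz Hzy]].
  - simpl in Hzy; unfold diag in Hzy; subst; exact (HR _ _ Hxz).
  - split; [exact (proj1 (HR _ _ Hxz)) | exact (proj2 (IH _ Hzy))].
Qed.

End Powers.

Section Closures.
Context {V : Type} (E : rel V) (W : V -> Prop).

Local Notation EW := (E_W E W).
Local Notation B := (B_W E W).
Local Notation Bm := (Bm_W E W).
Local Notation Ki := (rconv (K_W E W)).
Local Notation C := (C_W E W).

Lemma rstar_E_W_cases u y : rstar EW u y -> u = y \/ (compl W u /\ B u y).
Proof.
  intros [[|k] H]; [left; exact H | right].
  destruct H as [z [[w [[<- Hu] Huz]] Hzy]].
  split; [exact Hu|]; exists z; split; [exact Huz | exists k; exact Hzy].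
Qed.

Lemma C_W_support x y : C x y -> W x /\ W y.
Proof.
  intros [H | [<- Hx]]; [|auto].
  apply (rplus_support _ W) in H; [exact H|].
  intros a b [a' [[<- Ha] [b' [_ [<- Hb]]]]]; auto.
Qed.

Lemma C_W_refl x : W x -> C x x.
Proof. intros Hx; right; split; auto. Qed.

Lemma C_W_trans x y z : C x y -> C y z -> C x z.
Proof.
  intros [Hxy | [<- _]] [Hyz | [<- Hy]]; try (left; assumption).
  - left; exact (rplus_trans _ _ _ _ Hxy Hyz).
  - exact (C_W_refl _ Hy).
Qed.

Lemma C_W_step x y : W x -> W y -> K_W E W x y -> C x y.
Proof.
  intros Hx Hy Hxy; left; exists 1; split; [lia|].
  exists y; split; [|reflexivity].
  exists x; split; [split; auto | exists y; split; [exact Hxy | split; auto]].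
Qed.

Lemma peak_E_W_out_in x y : compl W x -> W y -> peak EW x y -> runion B Ki x y.
Proof.
  intros Hx Hy [u [Hux Huy]]; apply rstar_conv in Hux.
  destruct (rstar_E_W_cases _ _ Hux) as [<- | [Hu Bux]];
    destruct (rstar_E_W_cases _ _ Huy) as [<- | [_ Buy]];
    try contradiction; [left; exact Buy|].
  right; exists u; split; [exact Buy|].
  exists u; split; [split; auto | exact Bux].
Qed.

Lemma peak_E_W_in_out x y : W x -> compl W y -> peak EW x y -> runion Bm Ki x y.
Proof.
  intros Hx Hy [u [Hux Huy]]; apply rstar_conv in Hux.
  destruct (rstar_E_W_cases _ _ Hux) as [<- | [Hu Bux]];
    destruct (rstar_E_W_cases _ _ Huy) as [<- | [Hu' Buy]];
    try contradiction; [left; exact Bux|].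
  right; exists u; split; [exact Buy|].
  exists u; split; [split; auto | exact Bux].
Qed.

Lemma peak_E_W_in_in x y : W x -> W y -> peak EW x y -> C x y.
Proof.
  intros Hx Hy [u [Hux Huy]]; apply rstar_conv in Hux.
  destruct (rstar_E_W_cases _ _ Hux) as [<- | [Hu Bux]].
  - destruct (rstar_E_W_cases _ _ Huy) as [<- | [Hu _]];
      [exact (C_W_refl _ Hx) | contradiction].
  - destruct (rstar_E_W_cases _ _ Huy) as [<- | [_ Buy]]; [contradiction|].
    apply C_W_step; [exact Hx | exact Hy |].
    exists u; split; [exact Bux|].
    exists u; split; [split; auto | exact Buy].
Qed.

Lemma peak_absorb_left x a c : compl W x -> W c ->
  runion diag (rcomp (runion B Ki) C) x a -> peak EW a c ->
  rcomp (runion B Ki) C x c.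
Proof.
  intros Hx Hc [<- | [p [Hxp Cpa]]] Hac.
  - exists c; split; [exact (peak_E_W_out_in _ _ Hx Hc Hac) | exact (C_W_refl _ Hc)].
  - exists p; split; [exact Hxp|].
    apply (C_W_trans _ a); [exact Cpa|].
    exact (peak_E_W_in_in _ _ (proj2 (C_W_support _ _ Cpa)) Hc Hac).
Qed.

Lemma peak_absorb_right d f y : W d -> compl W y ->
  peak EW d f -> runion diag (rcomp C (runion Bm Ki)) f y ->
  rcomp C (runion Bm Ki) d y.
Proof.
  intros Hd Hy Hdf [<- | [q [Cfq Hqy]]].
  - exists d; split; [exact (C_W_refl _ Hd) | exact (peak_E_W_in_out _ _ Hd Hy Hdf)].
  - exists q; split; [|exact Hqy].
    apply (C_W_trans _ f); [|exact Cfq].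
    exact (peak_E_W_in_in _ _ Hd (proj1 (C_W_support _ _ Cfq)) Hdf).
Qed.

End Closures.

Theorem lemma4 (V : Type) (HV : inhabited V) (E : rel V) (W : V -> Prop) :
  let Dc := diagS (compl W) in
  let EWi := rstar (rconv (E_W E W)) in
  let EW := rstar (E_W E W) in
  let B := B_W E W in
  let Bm := Bm_W E W in
  let Ki := rconv (K_W E W) in
  let C := C_W E W in
  req
    (rcomp Dc
     (rcomp (runion diag (rcomp (runion B Ki) C))
     (rcomp EWi (rcomp EW (rcomp C (rcomp EWi (rcomp EW
     (rcomp (runion diag (rcomp C (runion Bm Ki))) Dc))))))))
    (rcomp Dc (rcomp (runion B Ki) (rcomp C (rcomp (runion Bm Ki) Dc)))).
Proof.
  cbv zeta; intros x y; split.
  - intros [x0 [[<- Hx] [a [Hxa [u [Hau [c [Huc [d [Ccd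
           [v [Hdv [f [Hvf [y0 [Hfy [-> Hy]]]]]]]]]]]]]]]]].
    destruct (C_W_support E W _ _ Ccd) as [Hc Hd].
    destruct (peak_absorb_left E W x a c Hx Hc Hxa (ex_intro _ u (conj Hau Huc)))
      as [p [Hxp Cpc]].
    destruct (peak_absorb_right E W d f y Hd Hy (ex_intro _ v (conj Hdv Hvf)) Hfy)
      as [q [Cdq Hqy]].
    exists x; split; [split; auto|]; exists p; split; [exact Hxp|].
    exists q; split; [exact (C_W_trans E W _ _ _ (C_W_trans E W _ _ _ Cpc Ccd) Cdq)|].
    exists y; split; [exact Hqy | split; auto].
  - intros [x0 [[<- Hx] [p [Hxp [q [Cpq [y0 [Hqy [-> Hy]]]]]]]]].
    destruct (C_W_support E W _ _ Cpq) as [Hp Hq].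
    exists x; split; [split; auto|].
    exists p; split; [right; exists p; split; [exact Hxp | exact (C_W_refl E W _ Hp)]|].
    exists p; split; [apply rstar_refl|]; exists p; split; [apply rstar_refl|].
    exists q; split; [exact Cpq|].
    exists q; split; [apply rstar_refl|]; exists q; split; [apply rstar_refl|].
    exists y; split; [right; exists q; split; [exact (C_W_refl E W _ Hq) | exact Hqy]|].
    split; auto.
Qed.
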